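(* The function $g(x)=\frac{x}{\sqrt{1-x^2}}\log\left(\frac1x\right)-\arcsin(x)\log\left(\frac{1}{\arcsin(x)}\right)$ is increasing from $(0,1)$ onto $\left(0,\frac{\pi}{2}\log\frac{\pi}{2}\right)$. In particular, for $x\in(0,1)$, $$x^{x/\sqrt{1-x^2}}<\arcsin(x)^{\arcsin(x)}<\left(\frac{\pi}{2}\right)^{\pi/2}x^{x/\sqrt{1-x^2}}.$$ *)

From Stdlib Require Export Reals.
Open Scope R_scope.

Definition g (x : R) : R :=
  x / sqrt (1 - x ^ 2) * ln (1 / x) - asin x * ln (1 / asin x).

From Stdlib Require Import Reals Lra.
From Coquelicot Require Import Coquelicot.
Open Scope R_scope.

(* Substituting x = sin t turns g into g_sin t = t ln t - tan t ln (sin t), whose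
   derivative ln t - ln (sin t) / cos^2 t is positive because sin t < t and
   cos^2 t < 1.  Elementary estimates give |g_sin t| <= 4 sqrt t near 0 and
   |g_sin t - (pi/2) ln (pi/2)| <= 2 (pi/2 - t) near pi/2, so the increasing
   function g_sin lies strictly between its two end limits and, being continuous,
   takes every value in between.  The power inequalities are exp of 0 < g x < (pi/2) ln (pi/2). *)

Section EndLimitsOnOpenInterval.
Variables (f : R -> R) (a c : R).
Hypothesis f_incr : forall s t, a < s -> s < t -> t < c -> f s < f t.

Lemma limit_left_end_near m :
  limit1_in f (open_interval a c) m a ->
  forall u e, a < u < c -> 0 < e -> exists s, a < s < u /\ Rabs (f s - m) < e.
Proof.
  intros lim u e u_in e_pos.
  destruct (lim e e_pos) as (d & d_pos & close); simpl in close.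
  exists (a + Rmin d (u - a) / 2).
  assert (0 < Rmin d (u - a)) by (apply Rmin_glb_lt; lra).
  pose proof (Rmin_l d (u - a)); pose proof (Rmin_r d (u - a)).
  split; [lra|].
  apply close; split; [unfold open_interval; lra|].
  unfold Rdist; rewrite Rabs_pos_eq; lra.
Qed.

Lemma limit_right_end_near M :
  limit1_in f (open_interval a c) M c ->
  forall u e, a < u < c -> 0 < e -> exists s, u < s < c /\ Rabs (f s - M) < e.
Proof.
  intros lim u e u_in e_pos.
  destruct (lim e e_pos) as (d & d_pos & close); simpl in close.
  exists (c - Rmin d (c - u) / 2).
  assert (0 < Rmin d (c - u)) by (apply Rmin_glb_lt; lra).
  pose proof (Rmin_l d (c - u)); pose proof (Rmin_r d (c - u)).
  split; [lra|].
  apply close; split; [unfold open_interval; lra|].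
  unfold Rdist; rewrite Rabs_left; lra.
Qed.

Lemma increasing_gt_limit_left m :
  limit1_in f (open_interval a c) m a -> forall t, a < t < c -> m < f t.
Proof.
  intros lim t t_in.
  set (t' := (a + t) / 2).
  assert (t'_in : a < t' < t) by (unfold t'; lra).
  assert (m <= f t').
  { apply Rnot_lt_le; intros below.
    destruct (limit_left_end_near m lim t' (m - f t')) as (s & s_in & close);
      [lra | lra |].
    assert (f s < f t') by (apply f_incr; lra).
    apply Rabs_def2 in close; lra. }
  assert (f t' < f t) by (apply f_incr; lra).
  lra.
Qed.

Lemma increasing_lt_limit_right M :
  limit1_in f (open_interval a c) M c -> forall t, a < t < c -> f t < M.
Proof.
  intros lim t t_in.
  set (t' := (t + c) / 2).
  assert (t'_in : t < t' < c) by (unfold t'; lra).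
  assert (f t' <= M).
  { apply Rnot_lt_le; intros above.
    destruct (limit_right_end_near M lim t' (f t' - M)) as (s & s_in & close);
      [lra | lra |].
    assert (f t' < f s) by (apply f_incr; lra).
    apply Rabs_def2 in close; lra. }
  assert (f t < f t') by (apply f_incr; lra).
  lra.
Qed.

Lemma continuous_between_end_limits m M :
  a < c -> (forall t, a < t < c -> continuity_pt f t) ->
  limit1_in f (open_interval a c) m a -> limit1_in f (open_interval a c) M c ->
  forall y, m < y < M -> exists t, a < t < c /\ f t = y.
Proof.
  intros ac cont lim_m lim_M y y_in.
  set (u := (a + c) / 2).
  destruct (limit_left_end_near m lim_m u (y - m)) as (s1 & s1_in & near_m);
    [unfold u; lra | lra |].
  destruct (limit_right_end_near M lim_M u (M - y)) as (s2 & s2_in & near_M);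
    [unfold u; lra | lra |].
  apply Rabs_def2 in near_m, near_M.
  destruct (Ranalysis5.IVT_interv (fun t => f t - y) s1 s2) as (t & t_in & root).
  - intros t t_in; apply continuity_pt_minus;
      [apply cont; lra | apply continuity_pt_const; intros ? ?; reflexivity].
  - lra.
  - lra.
  - lra.
  - exists t; split; lra.
Qed.
End EndLimitsOnOpenInterval.

Definition g_sin (t : R) : R := t * ln t - sin t / cos t * ln (sin t).

Lemma ln_lt_0 x : 0 < x < 1 -> ln x < 0.
Proof. intros x_in; rewrite <- ln_1; apply ln_increasing; lra. Qed.

Lemma ln_le_sub_1 x : 0 < x -> ln x <= x - 1.
Proof. intros x_pos; pose proof (exp_ineq1_le (ln x)); rewrite exp_ln in *; lra. Qed.

Lemma sin_cos_pos t : 0 < t < PI / 2 -> 0 < sin t /\ 0 < cos t.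
Proof. intros t_in; split; [apply sin_gt_0 | apply cos_gt_0]; lra. Qed.

Lemma sin_in_0_1 t : 0 < t < PI / 2 -> 0 < sin t < 1.
Proof.
  intros t_in; split; [apply sin_gt_0; lra|].
  rewrite <- sin_PI2; apply sin_increasing_1; lra.
Qed.

Lemma is_derive_g_sin t :
  0 < t < PI / 2 -> is_derive g_sin t (ln t - ln (sin t) / cos t ^ 2).
Proof.
  intros t_in; destruct (sin_cos_pos t t_in) as [sin_pos cos_pos].
  unfold g_sin; auto_derive.
  - repeat split; lra.
  - pose proof (sin2_cos2 t) as pythagoras; unfold Rsqr in pythagoras.
    field_simplify; [|lra|lra].
    apply (f_equal (fun z => z / cos t ^ 2)).
    transitivity (ln t * cos t ^ 2 - ln (sin t) * (sin t * sin t + cos t * cos t));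
      [ring | rewrite pythagoras; ring].
Qed.

Lemma g_sin_derive_pos t : 0 < t < PI / 2 -> 0 < ln t - ln (sin t) / cos t ^ 2.
Proof.
  intros t_in; destruct (sin_cos_pos t t_in) as [sin_pos cos_pos].
  pose proof (sin2_cos2 t) as pythagoras; unfold Rsqr in pythagoras.
  assert (sin_lt : sin t < t) by (apply sin_lt_x; lra).
  assert (ln_sin_neg : ln (sin t) < 0) by (apply ln_lt_0, sin_in_0_1, t_in).
  assert (ln_sin_lt : ln (sin t) < ln t) by (apply ln_increasing; lra).
  assert (sec2_ge_1 : ln (sin t) / cos t ^ 2 <= ln (sin t)).
  { apply Rmult_le_reg_r with (cos t ^ 2); [nra|].
    unfold Rdiv; rewrite Rmult_assoc, Rinv_l by nra; nra. }
  lra.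
Qed.

Lemma g_sin_increasing s t : 0 < s -> s < t -> t < PI / 2 -> g_sin s < g_sin t.
Proof.
  intros s_pos st t_lt.
  destruct (MVT_cor2 g_sin (fun u => ln u - ln (sin u) / cos u ^ 2) s t st)
    as (u & slope & u_in).
  { intros u u_in; apply is_derive_Reals, is_derive_g_sin; lra. }
  assert (0 < ln u - ln (sin u) / cos u ^ 2) by (apply g_sin_derive_pos; lra).
  nra.
Qed.

Lemma g_sin_continuous t : 0 < t < PI / 2 -> continuity_pt g_sin t.
Proof.
  intros t_in; apply derivable_continuous_pt.
  exists (ln t - ln (sin t) / cos t ^ 2); apply is_derive_Reals, is_derive_g_sin, t_in.
Qed.

Lemma xlnx_ge_neg_sqrt u : 0 < u -> - (2 * sqrt u) <= u * ln u.
Proof.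
  intros u_pos; set (r := sqrt u).
  assert (r_pos : 0 < r) by (apply sqrt_lt_R0; lra).
  assert (u_sq : u = r * r) by (unfold r; rewrite sqrt_sqrt; lra).
  pose proof (ln_le_sub_1 (/ r) (Rinv_0_lt_compat r r_pos)) as ln_inv_r.
  rewrite ln_Rinv in ln_inv_r by lra.
  rewrite u_sq, ln_mult by lra.
  assert (r * r * / r = r) by (field; lra).
  nra.
Qed.

Lemma xlnx_ge_tangent p t : 0 < p -> 0 < t -> p * ln p + (1 + ln p) * (t - p) <= t * ln t.
Proof.
  intros p_pos t_pos.
  pose proof (ln_le_sub_1 (p / t)) as ln_ratio.
  rewrite ln_div in ln_ratio by lra.
  assert (ln p - ln t <= p / t - 1) by (apply ln_ratio, Rdiv_lt_0_compat; lra).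
  assert (t * (p / t) = p) by (field; lra).
  nra.
Qed.

Lemma g_sin_ge_xlnx t : 0 < t < PI / 2 -> t * ln t <= g_sin t.
Proof.
  intros t_in; destruct (sin_cos_pos t t_in) as [sin_pos cos_pos].
  assert (ln (sin t) < 0) by (apply ln_lt_0, sin_in_0_1, t_in).
  assert (0 < sin t / cos t) by (apply Rdiv_lt_0_compat; lra).
  unfold g_sin; nra.
Qed.

Lemma g_sin_le_xlnx_cos t : 0 < t < PI / 2 -> g_sin t <= t * ln t + cos t.
Proof.
  intros t_in; destruct (sin_cos_pos t t_in) as [sin_pos cos_pos].
  pose proof (sin2_cos2 t) as pythagoras; unfold Rsqr in pythagoras.
  pose proof (ln_le_sub_1 (/ sin t) (Rinv_0_lt_compat _ sin_pos)) as ln_csc.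
  rewrite ln_Rinv in ln_csc by lra.
  assert (tan_pos : 0 < sin t / cos t) by (apply Rdiv_lt_0_compat; lra).
  (* -tan t ln (sin t) <= tan t (1 / sin t - 1) = (1 - sin t) / cos t <= (1 - sin t ^ 2) / cos t *)
  assert (sin t / cos t * (/ sin t - 1) = (1 - sin t) / cos t) by (field; lra).
  assert ((1 - sin t) / cos t <= cos t).
  { apply Rmult_le_reg_r with (cos t); [lra|].
    unfold Rdiv; rewrite Rmult_assoc, Rinv_l by lra; nra. }
  unfold g_sin; nra.
Qed.

Lemma g_sin_le_sqrt t : 0 < t <= 1 / 2 -> g_sin t <= 4 * sqrt t.
Proof.
  intros t_in; assert (t_in' : 0 < t < PI / 2) by (pose proof PI2_1; lra).
  destruct (sin_cos_pos t t_in') as [sin_pos cos_pos].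
  pose proof (sin2_cos2 t) as pythagoras; unfold Rsqr in pythagoras.
  assert (sin t < t) by (apply sin_lt_x; lra).
  assert (cos_ge : 1 / 2 <= cos t) by nra.
  assert (ln t <= 0) by (rewrite <- ln_1; apply ln_le; lra).
  assert (ln (sin t) < 0) by (apply ln_lt_0; lra).
  pose proof (xlnx_ge_neg_sqrt (sin t) sin_pos).
  assert (sqrt (sin t) <= sqrt t) by (apply sqrt_le_1; lra).
  assert (- (sin t / cos t * ln (sin t)) <= 2 * - (sin t * ln (sin t))).
  { apply Rmult_le_reg_r with (cos t); [lra|].
    replace (- (sin t / cos t * ln (sin t)) * cos t) with (- (sin t * ln (sin t)))
      by (field; lra).
    assert (0 <= - (sin t * ln (sin t))) by nra.
    set (entropy := - (sin t * ln (sin t))) in *; nra. }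
  unfold g_sin; nra.
Qed.

Lemma g_sin_limit_0 : limit1_in g_sin (open_interval 0 (PI / 2)) 0 0.
Proof.
  intros e e_pos.
  assert (0 < Rsqr (e / 4)) by (apply Rlt_0_sqr; lra).
  pose proof (Rmin_l (1 / 2) (Rsqr (e / 4))); pose proof (Rmin_r (1 / 2) (Rsqr (e / 4))).
  exists (Rmin (1 / 2) (Rsqr (e / 4))); split; [apply Rmin_glb_lt; lra|].
  simpl; unfold Rdist, open_interval; intros t [t_in t_near].
  rewrite Rminus_0_r, Rabs_pos_eq in t_near by lra.
  assert (sqrt t < e / 4).
  { rewrite <- (sqrt_Rsqr (e / 4)) by lra; apply sqrt_lt_1_alt; lra. }
  pose proof (g_sin_le_sqrt t ltac:(lra)).
  pose proof (g_sin_ge_xlnx t t_in); pose proof (xlnx_ge_neg_sqrt t ltac:(lra)).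
  rewrite Rminus_0_r; apply Rabs_def1; lra.
Qed.

Lemma xlnx_le_pi2 t : 0 < t <= PI / 2 -> t * ln t <= PI / 2 * ln (PI / 2).
Proof.
  intros t_in; pose proof PI2_1.
  assert (0 < ln (PI / 2)) by (rewrite <- ln_1; apply ln_increasing; lra).
  destruct (Rle_or_lt t 1).
  - assert (ln t <= 0) by (rewrite <- ln_1; apply ln_le; lra); nra.
  - assert (0 < ln t) by (rewrite <- ln_1; apply ln_increasing; lra).
    assert (ln t <= ln (PI / 2)) by (apply ln_le; lra); nra.
Qed.

Lemma g_sin_limit_pi2 :
  limit1_in g_sin (open_interval 0 (PI / 2)) (PI / 2 * ln (PI / 2)) (PI / 2).
Proof.
  intros e e_pos; exists (e / 2); split; [lra|].
  simpl; unfold Rdist, open_interval; intros t [t_in t_near].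
  rewrite Rabs_left in t_near by lra.
  assert (cos t <= PI / 2 - t) by (rewrite <- sin_shift; left; apply sin_lt_x; lra).
  assert (ln_pi2_le_1 : ln (PI / 2) <= 1).
  { pose proof (ln_le_sub_1 (PI / 2)); pose proof PI_4; pose proof PI2_1; lra. }
  pose proof (xlnx_ge_tangent (PI / 2) t ltac:(pose proof PI2_1; lra) ltac:(lra)).
  pose proof (xlnx_le_pi2 t ltac:(lra)).
  pose proof (g_sin_ge_xlnx t t_in); pose proof (g_sin_le_xlnx_cos t t_in).
  apply Rabs_def1; nra.
Qed.

Lemma asin_in_0_pi2 x : 0 < x < 1 -> 0 < asin x < PI / 2.
Proof.
  intros x_in; destruct (asin_bound_lt x ltac:(lra)) as [asin_gt asin_lt]; split; [|exact asin_lt].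
  apply sin_increasing_0; try lra; rewrite sin_0, sin_asin; lra.
Qed.

Lemma asin_increasing x y : 0 < x -> x < y -> y < 1 -> asin x < asin y.
Proof.
  intros x_pos xy y_lt.
  pose proof (asin_in_0_pi2 x ltac:(lra)); pose proof (asin_in_0_pi2 y ltac:(lra)).
  apply sin_increasing_0; try lra; rewrite !sin_asin; lra.
Qed.

Lemma g_asin x : 0 < x < 1 -> g x = g_sin (asin x).
Proof.
  intros x_in; pose proof (asin_in_0_pi2 x x_in).
  unfold g, g_sin; rewrite sin_asin, cos_asin, Rsqr_pow2 by lra.
  rewrite !ln_div, ln_1 by lra; ring.
Qed.

Lemma g_ln_Rpower x : 0 < x < 1 ->
  g x = ln (Rpower (asin x) (asin x)) - ln (Rpower x (x / sqrt (1 - x ^ 2))).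
Proof.
  intros x_in; pose proof (asin_in_0_pi2 x x_in).
  unfold g; rewrite !ln_Rpower, !ln_div, ln_1 by lra; ring.
Qed.

Theorem lemma4p9 :
  (forall x y : R, 0 < x -> x < y -> y < 1 -> g x < g y) /\
  (forall y : R,
     (exists x : R, 0 < x < 1 /\ g x = y) <-> 0 < y < PI / 2 * ln (PI / 2)) /\
  (forall x : R, 0 < x < 1 ->
     Rpower x (x / sqrt (1 - x ^ 2)) < Rpower (asin x) (asin x) /\
     Rpower (asin x) (asin x) <
       Rpower (PI / 2) (PI / 2) * Rpower x (x / sqrt (1 - x ^ 2))).
Proof.
  pose proof PI2_1 as pi2_gt_1.
  assert (g_bounds : forall x, 0 < x < 1 -> 0 < g x < PI / 2 * ln (PI / 2)).
  { intros x x_in; rewrite g_asin by exact x_in; pose proof (asin_in_0_pi2 x x_in).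
    split.
    - exact (increasing_gt_limit_left g_sin 0 (PI / 2) g_sin_increasing 0
               g_sin_limit_0 (asin x) ltac:(lra)).
    - exact (increasing_lt_limit_right g_sin 0 (PI / 2) g_sin_increasing _
               g_sin_limit_pi2 (asin x) ltac:(lra)). }
  split; [|split].
  - intros x y x_pos xy y_lt; rewrite !g_asin by lra.
    pose proof (asin_in_0_pi2 x ltac:(lra)); pose proof (asin_in_0_pi2 y ltac:(lra)).
    apply g_sin_increasing; try lra; apply asin_increasing; lra.
  - intros y; split; [intros (x & x_in & <-); exact (g_bounds x x_in)|].
    intros y_in.
    destruct (continuous_between_end_limits g_sin 0 (PI / 2) 0 _
                ltac:(lra) g_sin_continuous g_sin_limit_0 g_sin_limit_pi2 y y_in)
      as (t & t_in & g_t).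
    pose proof (sin_in_0_1 t t_in) as sin_in.
    exists (sin t); split; [exact sin_in|].
    rewrite g_asin, asin_sin by lra; exact g_t.
  - intros x x_in; pose proof (g_bounds x x_in) as [g_pos g_lt].
    rewrite g_ln_Rpower in g_pos, g_lt by exact x_in.
    assert (Rpower_pos : forall b e, 0 < Rpower b e) by (intros; apply exp_pos).
    split; apply ln_lt_inv; auto.
    - lra.
    - apply Rmult_lt_0_compat; auto.
    - rewrite ln_mult, (ln_Rpower (PI / 2)) by auto; lra.
Qed.
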